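(* Let $f:[0,\infty)\to[0,\infty)$ be continuous and assume its Hirsch function $h_f$ is well defined on $(0,\infty)$. Then the following are equivalent: (a) $h_f(\theta)=f(f(\theta))$ for all $\theta>0$; (b) $f(f(f(x)))=x\,f(f(x))$ for all $x\ge 0$.
   Context: Hirsch function: for $f:[0,\infty)\to[0,\infty)$ and $\theta>0$, $h_f(\theta)=x$ if and only if $f(x)=\theta x$, where, if $f(0)=0$, the trivial solution $x=0$ is not taken into account. It is required (for $h_f$ to be a function) that for every $\theta>0$ this equation has exactly one such solution $x$. *)

From Stdlib Require Import Reals.
Open Scope R_scope.

(* f : [0,oo) -> [0,oo) is modelled by f : R -> R mapping [0,oo) into [0,oo);
   values of f outside [0,oo) play no role. *)
Definition maps_nonneg (f : R -> R) : Prop :=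
  forall x, 0 <= x -> 0 <= f x.

Definition continuous_on_nonneg (f : R -> R) : Prop :=
  forall x, 0 <= x -> limit1_in f (fun y => 0 <= y) (f x) x.

Definition hirsch_sol (f : R -> R) (theta x : R) : Prop :=
  0 <= x /\ f x = theta * x /\ ~ (f 0 = 0 /\ x = 0).

Definition hirsch_well_defined (f : R -> R) : Prop :=
  forall theta, 0 < theta -> exists! x, hirsch_sol f theta x.

(* h_f(theta) = x  (meaningful under hirsch_well_defined f). *)
Definition hirsch_eq (f : R -> R) (theta x : R) : Prop :=
  hirsch_sol f theta x.

From Stdlib Require Import Reals Lra.
Open Scope R_scope.

(* (a) is (b) read at x = theta > 0, and continuity carries (b) down to x = 0.
   Conversely, (b) at x = theta is the equation in (a), so it remains to rule
   out the discarded trivial solution; in fact f (f theta) > 0 for every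
   theta > 0.  Taking x = 1 in (b) forces f 1 = 1.  Wherever f (f y) > 0, (b)
   says that f (f y) is the Hirsch root at y.  Hirsch roots are locally
   bounded away from 0: around the root x at c the slopes f a / a and
   f b / b straddle c (uniqueness and the intermediate value theorem), so for
   v near c the root at v lies between a and b.  Hence f (f y) cannot tend to
   0 through positive values, the zero set of f o f and its complement are
   both open in (0, oo), and by connectedness the zero set, which misses 1,
   is empty. *)

(* Extending f by its value at 0 to the left makes it continuous on all of R,
   so the Stdlib continuity library applies to it. *)
Definition ext0 (f : R -> R) (x : R) : R := f (Rmax 0 x).

Lemma ext0_eq f x : 0 <= x -> ext0 f x = f x.
Proof. intro Hx; unfold ext0; now rewrite Rmax_right. Qed.

Lemma Rmax0_dist x y : Rabs (Rmax 0 y - Rmax 0 x) <= Rabs (y - x).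
Proof.
  unfold Rmax, Rabs; repeat destruct (Rle_dec _ _); repeat destruct (Rcase_abs _); lra.
Qed.

Lemma continuity_ext0 f : continuous_on_nonneg f -> continuity (ext0 f).
Proof.
  intros Hc x eps Heps.
  destruct (Hc (Rmax 0 x) (Rmax_l 0 x) eps Heps) as [d [Hd Hclose]].
  exists d; split; [exact Hd|]. intros y [_ Hy]. apply Hclose. split.
  - apply Rmax_l.
  - eapply Rle_lt_trans; [apply Rmax0_dist | exact Hy].
Qed.

Lemma continuity_pt_eps g x : continuity_pt g x -> forall e, 0 < e ->
  exists d, 0 < d /\ forall y, Rabs (y - x) < d -> Rabs (g y - g x) < e.
Proof.
  intros Hc e He. destruct (Hc e He) as [d [Hd Hclose]].
  exists d; split; [exact Hd|]. intros y Hy.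
  destruct (Req_dec y x) as [->|Hne].
  - now rewrite Rminus_diag, Rabs_R0.
  - apply Hclose. split; [split; [exact I | auto] | exact Hy].
Qed.

Lemma continuity_pt_eq0_right g x :
  continuity_pt g x -> (forall y, x < y -> g y = 0) -> g x = 0.
Proof.
  intros Hc Hz. destruct (Req_dec (g x) 0) as [|Hne]; [assumption|].
  destruct (continuous_neq_0 g x Hc Hne) as [[e He] Hnz]; simpl in Hnz.
  exfalso; apply (Hnz (e / 2)).
  - rewrite Rabs_right; lra.
  - apply Hz; lra.
Qed.

Lemma Rabs_lt_sub_same_sign p t : Rabs t < Rabs p -> 0 < (p - t) * p.
Proof. unfold Rabs; destruct (Rcase_abs t), (Rcase_abs p); intros; nra. Qed.

Lemma interval_not_split (P Q : R -> Prop) a b : a < b ->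
  (forall x, a <= x <= b -> P x \/ Q x) ->
  (forall x, a <= x <= b -> P x -> Q x -> False) ->
  (forall x, a <= x <= b -> P x ->
     exists h, 0 < h /\ forall y, a <= y <= b -> Rabs (y - x) < h -> P y) ->
  (forall x, a <= x <= b -> Q x ->
     exists h, 0 < h /\ forall y, a <= y <= b -> Rabs (y - x) < h -> Q y) ->
  P a -> Q b -> False.
Proof.
  intros Hab Hcover Hdisj HPopen HQopen Pa Qb.
  set (E := fun x => a <= x <= b /\ P x).
  destruct (completeness E) as [m [Hub Hlub]].
  { exists b. intros x [Hx _]; lra. }
  { exists a. split; [lra | exact Pa]. }
  assert (Ham : a <= m) by (apply Hub; split; [lra | exact Pa]).
  assert (Hmb : m <= b) by (apply Hlub; intros x [Hx _]; lra).
  destruct (Hcover m (conj Ham Hmb)) as [Pm|Qm].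
  - assert (Hmb' : m < b).
    { destruct Hmb as [| ->]; [assumption|]. exfalso; apply (Hdisj b); auto; lra. }
    destruct (HPopen m (conj Ham Hmb) Pm) as [h [Hh HP]].
    assert (Hy1 := Rmin_l (m + h / 2) b). assert (Hy2 := Rmin_r (m + h / 2) b).
    set (y := Rmin (m + h / 2) b) in *.
    assert (Hmy : m < y) by (apply Rmin_glb_lt; lra).
    assert (Ey : E y).
    { split; [lra|]. apply HP; [lra|]. rewrite Rabs_right; lra. }
    specialize (Hub y Ey). lra.
  - assert (Ham' : a < m).
    { destruct Ham as [| <-]; [assumption|]. exfalso; apply (Hdisj a); auto; lra. }
    destruct (HQopen m (conj Ham Hmb) Qm) as [h [Hh HQ]].
    assert (Hk1 := Rmin_l (h / 2) (m - a)).
    set (k := Rmin (h / 2) (m - a)) in *.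
    assert (Hk : 0 < k) by (apply Rmin_glb_lt; lra).
    enough (m <= m - k) by lra.
    apply Hlub. intros x [Hx Px].
    destruct (Rle_lt_dec x (m - k)) as [|Hxk]; [assumption|].
    assert (x <= m) by (apply Hub; split; assumption).
    exfalso; apply (Hdisj x Hx Px), HQ; [assumption|].
    rewrite Rabs_left1; lra.
Qed.

Definition open_in_pos (P : R -> Prop) : Prop :=
  forall x, 0 < x -> P x ->
    exists h, 0 < h /\ forall y, 0 < y -> Rabs (y - x) < h -> P y.

Lemma open_in_pos_interval P a b : 0 < a -> open_in_pos P ->
  forall x, a <= x <= b -> P x ->
    exists h, 0 < h /\ forall y, a <= y <= b -> Rabs (y - x) < h -> P y.
Proof.
  intros Ha HP x Hx Px. destruct (HP x ltac:(lra) Px) as [h [Hh Hnear]].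
  exists h; split; [exact Hh|]. intros y Hy; apply Hnear; lra.
Qed.

Lemma halfline_not_split (P Q : R -> Prop) a b : 0 < a -> 0 < b ->
  (forall x, 0 < x -> P x \/ Q x) -> (forall x, P x -> Q x -> False) ->
  open_in_pos P -> open_in_pos Q -> P a -> Q b -> False.
Proof.
  intros Ha Hb Hcover Hdisj HP HQ Pa Qb.
  destruct (Rtotal_order a b) as [Hlt | [<- | Hgt]].
  - apply (interval_not_split P Q a b Hlt);
      try (apply open_in_pos_interval; assumption); try assumption.
    + intros x Hx; apply Hcover; lra.
    + intros x _; apply Hdisj.
  - exact (Hdisj a Pa Qb).
  - apply (interval_not_split Q P b a Hgt);
      try (apply open_in_pos_interval; assumption); try assumption.
    + intros x Hx; apply or_comm, Hcover; lra.
    + intros x _ Qx Px; exact (Hdisj x Px Qx).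
Qed.

Section HirschRoots.

Variable f : R -> R.
Hypothesis f_nonneg : maps_nonneg f.
Hypothesis f_cont : continuous_on_nonneg f.

Lemma slope_nonneg x : 0 < x -> 0 <= f x / x.
Proof.
  intro Hx. apply Rmult_le_pos; [apply f_nonneg; lra|].
  left; apply Rinv_0_lt_compat, Hx.
Qed.

Lemma exists_root_of_slopes v a b : 0 < a <= b ->
  (f a / a - v) * (f b / b - v) <= 0 -> exists s, a <= s <= b /\ f s = v * s.
Proof.
  intros Hab Hsign.
  assert (Hcont : continuity (fun s => ext0 f s - v * s)).
  { apply continuity_minus; [apply continuity_ext0, f_cont|].
    apply derivable_continuous, derivable_mult; [apply derivable_const | apply derivable_id]. }
  destruct (IVT_cor _ a b Hcont (proj2 Hab)) as [s [Hs Hroot]].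
  - rewrite !ext0_eq by lra.
    replace ((f a - v * a) * (f b - v * b))
      with ((a * b) * ((f a / a - v) * (f b / b - v))) by (field; lra).
    assert (0 < a * b) by (apply Rmult_lt_0_compat; lra). nra.
  - exists s; split; [exact Hs|]. rewrite ext0_eq in Hroot; lra.
Qed.

Hypothesis f_hirsch : hirsch_well_defined f.

Lemma hirsch_root_neq0 v x : 0 < v -> hirsch_sol f v x -> 0 < x.
Proof.
  intros Hv [Hx [Hfx Hnz]]. destruct Hx as [| <-]; [assumption|].
  exfalso; apply Hnz; split; [rewrite Hfx|]; ring.
Qed.

Lemma hirsch_root_unique v y1 y2 : 0 < v -> 0 < y1 -> 0 < y2 ->
  f y1 = v * y1 -> f y2 = v * y2 -> y1 = y2.
Proof.
  intros Hv Hy1 Hy2 E1 E2.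
  destruct (f_hirsch v Hv) as [x [_ Huniq]].
  rewrite <- (Huniq y1), <- (Huniq y2); [reflexivity | |];
    repeat split; auto; lra.
Qed.

Lemma no_double_crossing c x a b v : 0 < a < x -> x < b -> f x = c * x ->
  (f a / a - v) * (c - v) < 0 -> (f b / b - v) * (c - v) < 0 -> False.
Proof.
  intros Hax Hxb Hfx Ha Hb.
  assert (Hslope : f x / x = c) by (rewrite Hfx; field; lra).
  assert (Hv : 0 < v).
  { assert (0 <= f a / a) by (apply slope_nonneg; lra).
    assert (0 <= c) by (rewrite <- Hslope; apply slope_nonneg; lra).
    destruct (Rle_lt_dec v 0); [nra | assumption]. }
  destruct (exists_root_of_slopes v a x) as [s1 [Hs1 E1]]; [lra | rewrite Hslope; lra|].
  destruct (exists_root_of_slopes v x b) as [s2 [Hs2 E2]]; [lra | rewrite Hslope; lra|].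
  assert (Hs12 : s1 = s2) by (apply (hirsch_root_unique v); try assumption; lra).
  assert (Hs1x : s1 = x) by lra. rewrite Hs1x in E1.
  assert (c = v) by (apply (Rmult_eq_reg_r x); [lra | apply Rgt_not_eq; lra]).
  subst v. lra.
Qed.

Lemma slopes_straddle c x a b : 0 < c -> 0 < a < x -> x < b -> f x = c * x ->
  (f a / a - c) * (f b / b - c) < 0.
Proof.
  intros Hc Hax Hxb Hfx.
  set (p := f a / a - c). set (q := f b / b - c).
  assert (Hp : p <> 0).
  { intro Hp0. assert (a = x); [|lra]. apply (hirsch_root_unique c); try lra.
    unfold p in Hp0. replace (f a) with (f a / a * a) by (field; lra). nra. }
  assert (Hq : q <> 0).
  { intro Hq0. assert (b = x); [|lra]. apply (hirsch_root_unique c); try lra.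
    unfold q in Hq0. replace (f b) with (f b / b * b) by (field; lra). nra. }
  destruct (Rlt_le_dec (p * q) 0) as [|Hpq]; [assumption|].
  exfalso.
  assert (Hpq' : 0 < p * q).
  { destruct Hpq as [|Hpq]; [assumption|].
    symmetry in Hpq; apply Rmult_integral in Hpq as [|]; contradiction. }
  assert (Hsum : p + q <> 0) by (intro; assert (q = - p) by lra; nra).
  assert (Ha : f a / a = c + p) by (unfold p; ring).
  assert (Hb : f b / b = c + q) by (unfold q; ring).
  (* v = c + p q / (p + q) lies strictly between c and c + p, and between c and c + q. *)
  apply (no_double_crossing c x a b (c + p * q / (p + q))); try assumption;
    rewrite ?Ha, ?Hb.
  - replace ((c + p - (c + p * q / (p + q))) * (c - (c + p * q / (p + q))))
      with (- (p * p * (p * q)) / ((p + q) * (p + q))) by (field; exact Hsum).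
    apply Rdiv_neg_pos; [|nra]. assert (0 < p * p) by nra. nra.
  - replace ((c + q - (c + p * q / (p + q))) * (c - (c + p * q / (p + q))))
      with (- (q * q * (p * q)) / ((p + q) * (p + q))) by (field; exact Hsum).
    apply Rdiv_neg_pos; [|nra]. assert (0 < q * q) by nra. nra.
Qed.

Lemma hirsch_root_bounded_below c : 0 < c -> exists d e, 0 < d /\ 0 < e /\
  forall y v, 0 < y -> Rabs (v - c) < e -> f y = v * y -> d <= y.
Proof.
  intro Hc. destruct (f_hirsch c Hc) as [x [Hsol _]].
  assert (Hx := hirsch_root_neq0 c x Hc Hsol). destruct Hsol as [_ [Hfx _]].
  assert (Hstr := slopes_straddle c x (x / 2) (2 * x) Hc ltac:(lra) ltac:(lra) Hfx).
  set (p := f (x / 2) / (x / 2) - c) in *. set (q := f (2 * x) / (2 * x) - c) in *.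
  exists (x / 2), (Rmin c (Rmin (Rabs p) (Rabs q))).
  assert (Hp : 0 < Rabs p) by (apply Rabs_pos_lt; intros ->; lra).
  assert (Hq : 0 < Rabs q) by (apply Rabs_pos_lt; intros ->; lra).
  assert (He1 := Rmin_l c (Rmin (Rabs p) (Rabs q))).
  assert (He2 := Rmin_r c (Rmin (Rabs p) (Rabs q))).
  assert (He3 := Rmin_l (Rabs p) (Rabs q)). assert (He4 := Rmin_r (Rabs p) (Rabs q)).
  split; [lra|]. split; [apply Rmin_glb_lt; [lra | apply Rmin_glb_lt; lra]|].
  intros y v Hy Hv Hfy.
  assert (Hsp := Rabs_lt_sub_same_sign p (v - c) ltac:(lra)).
  assert (Hsq := Rabs_lt_sub_same_sign q (v - c) ltac:(lra)).
  apply Rabs_def2 in Hv as [Hv1 Hv2].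
  destruct (exists_root_of_slopes v (x / 2) (2 * x)) as [s [Hs Hfs]]; [lra| |].
  - replace (f (x / 2) / (x / 2) - v) with (p - (v - c)) by (unfold p; ring).
    replace (f (2 * x) / (2 * x) - v) with (q - (v - c)) by (unfold q; ring).
    nra.
  - assert (y = s) by (apply (hirsch_root_unique v); lra). lra.
Qed.

End HirschRoots.

Section IteratedIdentity.

Variable f : R -> R.
Hypothesis f_nonneg : maps_nonneg f.
Hypothesis f_cont : continuous_on_nonneg f.

Lemma ext0_ff_eq x : 0 <= x -> ext0 f (ext0 f x) = f (f x).
Proof. intro Hx. rewrite (ext0_eq f x Hx). apply ext0_eq, f_nonneg, Hx. Qed.

Lemma continuity_ext0_ff : continuity (fun x => ext0 f (ext0 f x)).
Proof. apply (continuity_comp (ext0 f) (ext0 f)); apply continuity_ext0, f_cont. Qed.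

Lemma iterate_identity_at0 :
  (forall x, 0 < x -> f (f (f x)) = x * f (f x)) -> f (f (f 0)) = 0 * f (f 0).
Proof.
  intro Hpos.
  set (G := fun x => ext0 f (ext0 f (ext0 f x)) - x * ext0 f (ext0 f x)).
  assert (HG : forall x, 0 <= x -> G x = f (f (f x)) - x * f (f x)).
  { intros x Hx. unfold G. rewrite (ext0_eq f x Hx).
    rewrite ext0_ff_eq, ext0_eq by (apply f_nonneg, Hx). reflexivity. }
  enough (G 0 = 0) by (rewrite HG in * by lra; lra).
  apply continuity_pt_eq0_right.
  - apply continuity_minus.
    + apply (continuity_comp (ext0 f) (fun s => ext0 f (ext0 f s)));
        [apply continuity_ext0, f_cont | apply continuity_ext0_ff].
    + apply continuity_mult; [apply derivable_continuous, derivable_id | apply continuity_ext0_ff].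
  - intros y Hy. rewrite HG, Hpos by lra. ring.
Qed.

Hypothesis f_hirsch : hirsch_well_defined f.
Hypothesis f_iter : forall x, 0 <= x -> f (f (f x)) = x * f (f x).

Lemma fixed_point_one : f 1 = 1.
Proof.
  destruct (f_hirsch 1 Rlt_0_1) as [y [Hsol _]].
  assert (Hy := hirsch_root_neq0 f 1 y Rlt_0_1 Hsol).
  destruct Hsol as [_ [Hfy _]]. rewrite Rmult_1_l in Hfy.
  assert (Hyy := f_iter y ltac:(lra)). rewrite !Hfy in Hyy.
  assert (y = 1) by (apply (Rmult_eq_reg_l y); lra). congruence.
Qed.

Lemma ff_zero_set_open : open_in_pos (fun x => f (f x) = 0).
Proof.
  intros x Hx Hzero.
  destruct (hirsch_root_bounded_below f f_nonneg f_cont f_hirsch x Hx)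
    as [d [e [Hd [He Hbound]]]].
  destruct (continuity_pt_eps _ x (continuity_ext0_ff x) d Hd) as [h [Hh Hclose]].
  assert (Hm1 := Rmin_l h e). assert (Hm2 := Rmin_r h e).
  exists (Rmin h e). split; [apply Rmin_glb_lt; lra|].
  intros y Hy Hyx.
  specialize (Hclose y ltac:(lra)).
  rewrite !ext0_ff_eq, Hzero, Rminus_0_r in Hclose by lra.
  rewrite Rabs_right in Hclose by (apply Rle_ge, f_nonneg, f_nonneg; lra).
  destruct (f_nonneg (f y) ltac:(apply f_nonneg; lra)) as [Hpos | Heq];
    [exfalso | now symmetry].
  (* By (b), a positive f (f y) is the Hirsch root at y, so it cannot be below d. *)
  enough (d <= f (f y)) by lra.
  apply (Hbound (f (f y)) y Hpos); [lra | apply f_iter; lra].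
Qed.

Lemma ff_pos_set_open : open_in_pos (fun x => 0 < f (f x)).
Proof.
  intros x Hx Hpos.
  assert (Hne : ext0 f (ext0 f x) <> 0) by (rewrite ext0_ff_eq; lra).
  destruct (continuous_neq_0 _ x (continuity_ext0_ff x) Hne) as [[h Hh] Hnz].
  exists h; split; [exact Hh|]. intros y Hy Hyx.
  specialize (Hnz (y - x) Hyx). replace (x + (y - x)) with y in Hnz by ring.
  rewrite ext0_ff_eq in Hnz by lra.
  destruct (f_nonneg (f y) (f_nonneg y ltac:(lra))); [assumption | congruence].
Qed.

Lemma ff_neq0 theta : 0 < theta -> f (f theta) <> 0.
Proof.
  intros Hth Hzero.
  apply (halfline_not_split (fun x => 0 < f (f x)) (fun x => f (f x) = 0) 1 theta);
    try lra.
  - intros x Hx.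
    destruct (f_nonneg (f x) (f_nonneg x ltac:(lra))); [left | right]; congruence.
  - intros x; lra.
  - exact ff_pos_set_open.
  - exact ff_zero_set_open.
  - rewrite !fixed_point_one; lra.
Qed.

End IteratedIdentity.

Theorem theorem4 (f : R -> R) :
  maps_nonneg f ->
  continuous_on_nonneg f ->
  hirsch_well_defined f ->
  ((forall theta, 0 < theta -> hirsch_eq f theta (f (f theta))) <->
   (forall x, 0 <= x -> f (f (f x)) = x * f (f x))).
Proof.
  intros Hn Hc Hw.
  split.
  - intros Ha.
    assert (Hpos : forall x, 0 < x -> f (f (f x)) = x * f (f x))
      by (intros x Hx; apply (Ha x Hx)).
    intros x [Hx | <-]; [exact (Hpos x Hx) | exact (iterate_identity_at0 f Hn Hc Hpos)].
  - intros Hb theta Htheta.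
    split; [apply Hn, Hn; lra|]. split; [apply Hb; lra|].
    intros [_ Hzero]. exact (ff_neq0 f Hn Hc Hw Hb theta Htheta Hzero).
Qed.
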